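(* Fix a finite set $T$ of tuples $(q_1,\dots,q_m,r;p_1,\dots,p_k,t)$ of variables. The following three extensions of $\mathbf{L}^*(/)$ (each including the cut rule) derive exactly the same sequents: (1) $\mathbf{L}^*(/)$ extended with the B-rules for all tuples in $T$; (2) $\mathbf{L}^*(/)$ extended with the $\mathrm{B}'$-rules for all tuples in $T$; (3) $\mathbf{L}^*(/)$ extended with the B-axioms for all tuples in $T$.
   Context: $\mathbf{L}^*(/)$ is the one-division Lambek calculus: formulae are built from variables using only $/$; sequents are $\Pi\to A$ with $\Pi$ a finite (possibly empty, $\Lambda$) sequence of formulae; axioms $A\to A$; rules ($/L$) from $\Pi\to A$ and $\Delta_1,B,\Delta_2\to C$ infer $\Delta_1,B/A,\Pi,\Delta_2\to C$; ($/R$) from $\Pi,A\to B$ infer $\Pi\to B/A$; (cut) from $\Pi\to A$ and $\Delta_1,A,\Delta_2\to C$ infer $\Delta_1,\Pi,\Delta_2\to C$. For a tuple $(q_1,\dots,q_m,r;p_1,\dots,p_k,t)$ of concrete variables: the B-rule is: from $\Delta,q_1,\dots,q_m\to r$ infer $p_1,\dots,p_k,\Delta\to t$ (for arbitrary sequences $\Delta$ of formulae); the $\mathrm{B}'$-rule is: from $\Pi_1\to p_1$, ..., $\Pi_k\to p_k$ and $\Delta,q_1,\dots,q_m\to r$ infer $\Pi_1,\dots,\Pi_k,\Delta\to t$; the B-axiom is $\Lambda\to (t/(r/q_1\ldots q_m))/p_1\ldots p_k$, where $E/F_1\ldots F_n$ abbreviates $(\ldots((E/F_n)/F_{n-1})\ldots)/F_1$.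 *)

From Stdlib Require Import List.
Import ListNotations.

(* Formulae built from variables (indexed by nat) using only "/".
   [Div B A] is the formula B / A. *)
Inductive form : Type :=
| Var : nat -> form
| Div : form -> form -> form.

(* E / F_1 ... F_n  :=  (...((E / F_n) / F_{n-1}) ...) / F_1 *)
Fixpoint divs (E : form) (Fs : list form) : form :=
  match Fs with
  | [] => E
  | F :: Fs' => Div (divs E Fs') F
  end.

Record btuple : Type := BTuple {
  tq : list nat;
  tr : nat;
  tp : list nat;
  tt : nat
}.

(* The B-axiom formula  (t / (r / q_1 ... q_m)) / p_1 ... p_k *)
Definition baxiom_formula (u : btuple) : form :=
  divs (Div (Var (tt u)) (divs (Var (tr u)) (map Var (tq u)))) (map Var (tp u)).

Inductive ext_mode : Type := ModeB | ModeB' | ModeAx.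

Inductive der (T : list btuple) (md : ext_mode) : list form -> form -> Prop :=
| d_ax A : der T md [A] A
| d_divL Pi A D1 B D2 C :
    der T md Pi A -> der T md (D1 ++ B :: D2) C ->
    der T md (D1 ++ Div B A :: Pi ++ D2) C
| d_divR Pi A B :
    der T md (Pi ++ [A]) B -> der T md Pi (Div B A)
| d_cut Pi A D1 D2 C :
    der T md Pi A -> der T md (D1 ++ A :: D2) C ->
    der T md (D1 ++ Pi ++ D2) C
| d_B u D :
    md = ModeB -> In u T ->
    der T md (D ++ map Var (tq u)) (Var (tr u)) ->
    der T md (map Var (tp u) ++ D) (Var (tt u))
| d_B' u (Pis : list (list form)) D :
    md = ModeB' -> In u T ->
    length Pis = length (tp u) ->
    (forall i, i < length (tp u) ->
       der T md (nth i Pis []) (Var (nth i (tp u) 0))) ->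
    der T md (D ++ map Var (tq u)) (Var (tr u)) ->
    der T md (concat Pis ++ D) (Var (tt u))
| d_Bax u :
    md = ModeAx -> In u T ->
    der T md [] (baxiom_formula u).

(* Over L*(/) with cut, the B-rule, the B'-rule and the B-axiom of a tuple are
   interderivable: the B'-rule is the B-rule followed by cuts of the premises
   Pi_i -> p_i against the variables p_i, and conversely the B-rule is the
   B'-rule with Pi_i = p_i; the B-axiom is the conclusion of the B-rule applied
   to Delta = r / q_1 ... q_m, and the B-rule follows from the B-axiom by (/L)
   and cut.  Since the three calculi share all other rules, each derives every
   sequent derivable in the others. *)
From Stdlib Require Import List Arith.
Import ListNotations.

Section Admissibility.
Variable T : list btuple.

Lemma divs_elim md E Fs : der T md (divs E Fs :: Fs) E.
Proof.
  induction Fs as [|F Fs IH]; simpl.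
  - apply d_ax.
  - exact (d_divL T md [F] F [] (divs E Fs) Fs E (d_ax T md F) IH).
Qed.

Lemma divs_intro md E Fs L : der T md (L ++ Fs) E -> der T md L (divs E Fs).
Proof.
  revert L; induction Fs as [|F Fs IH]; intros L H; simpl.
  - rewrite app_nil_r in H. exact H.
  - apply d_divR, IH. rewrite <- app_assoc. exact H.
Qed.

Lemma der_cut_vars md ps : forall Pis L D C,
  length Pis = length ps ->
  (forall i, i < length ps -> der T md (nth i Pis []) (Var (nth i ps 0))) ->
  der T md (L ++ map Var ps ++ D) C ->
  der T md (L ++ concat Pis ++ D) C.
Proof.
  induction ps as [|p ps IH]; intros [|P Pis] L D C Hlen Hprem H;
    try discriminate; simpl in *.
  - exact H.
  - injection Hlen as Hlen.
    assert (HP : der T md (L ++ P ++ map Var ps ++ D) C).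
    { apply d_cut with (A := Var p); [apply (Hprem 0); auto with arith | exact H]. }
    rewrite <- app_assoc, app_assoc.
    apply IH; [exact Hlen | | now rewrite <- app_assoc].
    intros i Hi. apply (Hprem (S i)). auto with arith.
Qed.

Definition B_rule_admissible md u : Prop :=
  forall D, der T md (D ++ map Var (tq u)) (Var (tr u)) ->
            der T md (map Var (tp u) ++ D) (Var (tt u)).

Definition B'_rule_admissible md u : Prop :=
  forall Pis D, length Pis = length (tp u) ->
    (forall i, i < length (tp u) -> der T md (nth i Pis []) (Var (nth i (tp u) 0))) ->
    der T md (D ++ map Var (tq u)) (Var (tr u)) ->
    der T md (concat Pis ++ D) (Var (tt u)).

Definition B_axiom_derivable md u : Prop := der T md [] (baxiom_formula u).

Lemma B'_rule_admissible_iff md u : B'_rule_admissible md u <-> B_rule_admissible md u.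
Proof.
  split.
  - intros HB' D H.
    replace (map Var (tp u)) with (concat (map (fun p => [Var p]) (tp u)))
      by (induction (tp u); simpl; congruence).
    apply HB'; [apply length_map | | exact H].
    intros i Hi.
    rewrite (nth_indep _ [] ((fun p => [Var p]) 0)) by (rewrite length_map; exact Hi).
    rewrite (map_nth (fun p => [Var p])).
    apply d_ax.
  - intros HB Pis D Hlen Hprem H.
    exact (der_cut_vars md (tp u) Pis [] D _ Hlen Hprem (HB D H)).
Qed.

Lemma B_axiom_derivable_iff md u : B_axiom_derivable md u <-> B_rule_admissible md u.
Proof.
  unfold B_axiom_derivable, baxiom_formula.
  set (R := divs (Var (tr u)) (map Var (tq u))).
  split.
  - intros Hax D H.
    assert (HR : der T md D R) by (apply divs_intro; exact H).
    assert (Hp : der T md (map Var (tp u)) (Div (Var (tt u)) R))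
      by exact (d_cut T md [] _ [] (map Var (tp u)) _ Hax (divs_elim md _ _)).
    assert (HdivL : der T md (Div (Var (tt u)) R :: D) (Var (tt u))).
    { pose proof (d_divL T md D R [] (Var (tt u)) [] _ HR (d_ax T md _)) as HdivL.
      simpl in HdivL. rewrite app_nil_r in HdivL. exact HdivL. }
    exact (d_cut T md _ _ [] D _ Hp HdivL).
  - intros HB.
    apply (divs_intro md _ _ []), d_divR, HB, divs_elim.
Qed.

Definition extension_admissible md md' u : Prop :=
  match md with
  | ModeB => B_rule_admissible md' u
  | ModeB' => B'_rule_admissible md' u
  | ModeAx => B_axiom_derivable md' u
  end.

Lemma extension_admissible_iff md md' u :
  extension_admissible md md' u <-> B_rule_admissible md' u.
Proof.
  destruct md; simpl.
  - reflexivity.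
  - apply B'_rule_admissible_iff.
  - apply B_axiom_derivable_iff.
Qed.

Lemma extension_admissible_self md u : In u T -> extension_admissible md md u.
Proof.
  intros Hu; destruct md; simpl.
  - intros D. exact (d_B T ModeB u D eq_refl Hu).
  - intros Pis D. exact (d_B' T ModeB' u Pis D eq_refl Hu).
  - exact (d_Bax T ModeAx u eq_refl Hu).
Qed.

Lemma der_transfer md md' Pi A :
  (forall u, In u T -> extension_admissible md md' u) ->
  der T md Pi A -> der T md' Pi A.
Proof.
  intros Hadm Hder.
  induction Hder as [A | Pi A D1 B D2 C _ IHPi _ IHC | Pi A B _ IH
    | Pi A D1 D2 C _ IHPi _ IHC | u D -> Hu _ IH
    | u Pis D -> Hu Hlen _ IHprem _ IH | u -> Hu].
  - apply d_ax.
  - apply d_divL; assumption.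
  - apply d_divR; assumption.
  - eapply d_cut; eassumption.
  - exact (Hadm u Hu D IH).
  - exact (Hadm u Hu Pis D Hlen IHprem IH).
  - exact (Hadm u Hu).
Qed.

Lemma der_mode_independent md md' Pi A : der T md Pi A -> der T md' Pi A.
Proof.
  apply der_transfer. intros u Hu.
  apply extension_admissible_iff, (extension_admissible_iff md').
  apply extension_admissible_self, Hu.
Qed.

End Admissibility.

Theorem lemma3 (T : list btuple) (Pi : list form) (A : form) :
  (der T ModeB Pi A <-> der T ModeB' Pi A) /\
  (der T ModeB' Pi A <-> der T ModeAx Pi A).
Proof.
  split; split; apply der_mode_independent.
Qed.
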